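(* Let $k\ge3$ be an integer, $c>1$ fixed, $\delta=1/c$, $\mathcal N$ a positive integer with $\mathcal N^{1/k}>2$, $\mathcal L=\log \mathcal N^{1/k}$, and $\kappa>0$ fixed. Define $$\mathcal J(z)=\int_2^{\mathcal N^{1/k}} \frac{\delta x^{\delta-1} e(zx^k)}{\log x}\,dx,\qquad \mathcal I(z)=\int_0^{\mathcal N^{1/k}} \delta x^{\delta-1}e(zx^k)\,dx.$$ Then for any nonzero $\beta \in \mathbb R$, $$\mathcal J (\beta) - \mathcal L^{-1} \mathcal I (\beta) \ll \frac{\mathcal N^{\delta/k}}{\mathcal L^{\kappa+2} } + \min\{ \mathcal N^{\delta/k}, |\beta |^{-\delta/k}\}\frac{\log \log \mathcal N}{\mathcal L^2}.$$
   Context: $e(x)=e^{2\pi i x}$. Implied constants may depend on $c,k,\kappa$. *)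

From Stdlib Require Import Reals.
From Coquelicot Require Import Coquelicot.
Open Scope R_scope.

Definition e_ (t : R) : C := (cos (2 * PI * t), sin (2 * PI * t)).

Definition integrand (delta : R) (k : nat) (z x : R) : C :=
  scal (delta * Rpower x (delta - 1)) (e_ (z * x ^ k)).

Definition Jint (delta : R) (k : nat) (X z : R) : C :=
  RInt (V := C_R_CompleteNormedModule)
    (fun x => scal (/ ln x) (integrand delta k z x)) 2 X.

(* I(z) = int_0^{N^{1/k}} delta x^{delta-1} e(z x^k) dx ; improper at 0 when delta < 1 *)
Definition Iint (delta : R) (k : nat) (X z : R) : C :=
  RInt_gen (V := C_R_CompleteNormedModule)
    (integrand delta k z) (at_right 0) (at_point X).

From Stdlib Require Import Reals Lra Lia.
From Coquelicot Require Import Coquelicot.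
Open Scope R_scope.

(* On [2, X] with [L = ln X], [J - I / L] is the integral of [delta x^(delta-1) (1/ln x - 1/L) e(beta x^k)],
   up to the piece [I] picks up on [(0, 2]], which is [O(1/L)].  Below [Y = X / L^m] (with
   [m delta = 2 + kappa]) the weight [1/ln x - 1/L] is bounded and the integral is trivially
   [O(Y^delta) = O(X^delta / L^(2+kappa))].  Above [Y] the weight is [O(ln L / L^2)] and decreasing, so
   beyond the scale [|beta|^(-1/k)] the second mean value theorem (integration by parts against the
   primitive of [k x^(k-1) e(beta x^k)]) bounds the integral by [O(|beta|^(-delta/k) ln L / L^2)], and
   below that scale the trivial bound gives the same. *)

Lemma Rpower_gt_0 x y : 0 < Rpower x y.
Proof. apply exp_pos. Qed.

Lemma is_derive_Rpower y x :
  0 < x -> is_derive (fun t => Rpower t y) x (y * Rpower x (y - 1)).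
Proof. now intros; apply is_derive_Reals, derivable_pt_lim_power. Qed.

Lemma ex_derive_Rpower y x : 0 < x -> ex_derive (fun t => Rpower t y) x.
Proof. now intros; eexists; apply is_derive_Rpower. Qed.

Lemma Rpower_le_l_nonpos x y e : 0 < x <= y -> e <= 0 -> Rpower y e <= Rpower x e.
Proof.
  intros Hxy He; unfold Rpower.
  assert (ln x <= ln y) by (apply ln_le; lra).
  destruct (Req_dec (e * ln y) (e * ln x)) as [-> | Hne]; [lra |].
  left; apply exp_increasing; nra.
Qed.

Lemma Rpower_sub_mul_pow d k x : (0 < k)%nat -> 0 < x ->
  Rpower x (d - INR k) * x ^ (k - 1) = Rpower x (d - 1).
Proof.
  intros Hk Hx; rewrite <- Rpower_pow, <- Rpower_plus, minus_INR by (lia || lra).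
  f_equal; simpl; ring.
Qed.

Lemma ln_gt_0 x : 1 < x -> 0 < ln x.
Proof. intros; rewrite <- ln_1; apply ln_increasing; lra. Qed.

Lemma ln_2_lt_1 : ln 2 < 1.
Proof.
  rewrite <- (ln_exp 1); apply ln_increasing; [lra |].
  pose proof (exp_ineq1 1); lra.
Qed.

Lemma ln_le_2_sqrt x : 0 < x -> ln x <= 2 * sqrt x.
Proof.
  intros Hx; pose proof (sqrt_lt_R0 x Hx) as Hs.
  rewrite <- (sqrt_sqrt x) at 1 by lra; rewrite ln_mult by lra.
  assert (ln (sqrt x) < sqrt x).
  { rewrite <- (ln_exp (sqrt x)) at 2; apply ln_increasing; auto.
    pose proof (exp_ineq1 (sqrt x)); lra. }
  lra.
Qed.

Lemma mul_ln_le_half m L : 0 < m -> 16 * m ^ 2 <= L -> m * ln L <= L / 2.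
Proof.
  intros Hm HL; assert (HL0 : 0 < L) by nra.
  pose proof (ln_le_2_sqrt L HL0).
  assert (4 * m <= sqrt L).
  { rewrite <- (sqrt_pow2 (4 * m)) by lra; apply sqrt_le_1_alt; nra. }
  pose proof (sqrt_sqrt L ltac:(lra)); nra.
Qed.

(* Completing the square: [a ln L <= 2 a sqrt L <= a^2 / d + d L]. *)
Lemma Rpower_le_exp_mul a d L : 0 < a -> 0 < d -> 0 < L ->
  Rpower L a <= exp (a ^ 2 / d) * exp (d * L).
Proof.
  intros Ha Hd HL; unfold Rpower; rewrite <- exp_plus.
  pose proof (ln_le_2_sqrt L HL); pose proof (sqrt_sqrt L ltac:(lra)).
  assert (2 * a * sqrt L <= a ^ 2 / d + d * L).
  { apply Rmult_le_reg_l with d; auto.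
    replace (d * (a ^ 2 / d + d * L)) with (a ^ 2 + d * d * (sqrt L * sqrt L))
      by (rewrite H0; field; lra).
    pose proof (pow2_ge_0 (d * sqrt L - a)); nra. }
  destruct (Req_dec (a * ln L) (a ^ 2 / d + d * L)) as [-> | Hne]; [lra |].
  left; apply exp_increasing; nra.
Qed.

Lemma inv_le_exp_div_Rpower a d L : 0 < a -> 0 < d -> 0 < L ->
  / L <= exp (a ^ 2 / d) * (exp (d * L) / Rpower L (1 + a)).
Proof.
  intros Ha Hd HL; pose proof (Rpower_le_exp_mul a d L Ha Hd HL); pose proof (Rpower_gt_0 L a).
  rewrite Rpower_plus, Rpower_1 by lra.
  replace (exp (a ^ 2 / d) * (exp (d * L) / (L * Rpower L a)))
    with (exp (a ^ 2 / d) * exp (d * L) / Rpower L a * / L) by (field; lra).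
  rewrite <- (Rmult_1_l (/ L)) at 1; apply Rmult_le_compat_r; [left; apply Rinv_0_lt_compat, HL |].
  apply Rmult_le_reg_r with (Rpower L a); [lra |]; field_simplify; lra.
Qed.

Lemma is_RInt_power_density d a b : 0 < a -> a <= b ->
  is_RInt (fun x => d * Rpower x (d - 1)) a b (Rpower b d - Rpower a d).
Proof.
  intros Ha Hab; apply (is_RInt_derive (fun x => Rpower x d));
    intros x Hx; rewrite Rmin_left in Hx by lra.
  - apply is_derive_Rpower; lra.
  - apply (ex_derive_continuous (fun x => d * Rpower x (d - 1))).
    auto_derive; apply ex_derive_Rpower; lra.
Qed.

Lemma at_right_0_lt b : 0 < b -> at_right 0 (fun a => 0 < a < b).
Proof.
  intros Hb; exists (mkposreal b Hb); intros y Hy Hy0.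
  unfold ball in Hy; simpl in Hy; unfold AbsRing_ball, abs, minus, plus, opp in Hy; simpl in Hy.
  rewrite Ropp_0, Rplus_0_r, Rabs_pos_eq in Hy by lra; lra.
Qed.

Lemma minus_plus_r {G : AbelianGroup} (u v : G) : minus (plus u v) v = u.
Proof. unfold minus; rewrite <- plus_assoc; rewrite <- (plus_zero_r u) at 2; f_equal; apply plus_opp_r. Qed.

Section PowerDominatedImproperIntegral.

Variables (V : CompleteNormedModule R_AbsRing) (f : R -> V) (d b : R).
Hypotheses (Hb : 0 < b) (Hd : 0 < d)
  (f_cont : forall x, 0 < x <= b -> continuous f x)
  (f_dom : forall x, 0 < x <= b -> norm (f x) <= d * Rpower x (d - 1)).

Let G a := RInt f a b.

Lemma ex_RInt_dominated a a' : 0 < a -> a <= a' <= b -> ex_RInt f a a'.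
Proof.
  intros Ha Ha'; apply ex_RInt_continuous; intros z Hz.
  rewrite Rmin_left, Rmax_right in Hz by lra; apply f_cont; lra.
Qed.

Lemma norm_RInt_dominated a a' : 0 < a -> a <= a' <= b ->
  norm (RInt f a a') <= Rpower a' d - Rpower a d.
Proof.
  intros Ha Ha'.
  apply (norm_RInt_le f (fun x => d * Rpower x (d - 1)) a a'); [lra | | | ].
  - intros x Hx; apply f_dom; lra.
  - apply RInt_correct, ex_RInt_dominated; lra.
  - apply is_RInt_power_density; lra.
Qed.

Lemma minus_RInt_to_b a a' : 0 < a -> a <= a' <= b -> minus (G a) (G a') = RInt f a a'.
Proof.
  intros Ha Ha'; unfold G.
  rewrite <- (RInt_Chasles f a a' b) by (apply ex_RInt_dominated; lra).
  exact (minus_plus_r (RInt f a a') (RInt f a' b)).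
Qed.

Lemma cauchy_RInt_at_right_0 : cauchy (filtermap G (at_right 0)).
Proof.
  intros eps; pose proof (cond_pos eps) as Heps.
  set (a0 := Rmin b (Rpower (eps / 2) (/ d))).
  assert (Ha0 : 0 < a0 <= b) by (split; [apply Rmin_glb_lt; [lra | apply Rpower_gt_0] | apply Rmin_l]).
  assert (Ha0d : Rpower a0 d <= eps / 2).
  { apply Rle_trans with (Rpower (Rpower (eps / 2) (/ d)) d).
    - apply Rle_Rpower_l; [lra | split; [lra | apply Rmin_r]].
    - rewrite Rpower_mult, Rinv_l, Rpower_1; lra. }
  exists (G a0); unfold filtermap; apply (filter_imp (fun a => 0 < a < a0)); [| apply at_right_0_lt; lra].
  intros a Ha; apply (@norm_compat1 R_AbsRing V).
  rewrite minus_RInt_to_b by lra.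
  pose proof (norm_RInt_dominated a a0 ltac:(lra) ltac:(lra)); pose proof (Rpower_gt_0 a d); lra.
Qed.

Lemma is_RInt_gen_at_right_0_dominated :
  exists l, is_RInt_gen f (at_right 0) (at_point b) l /\ norm l <= Rpower b d.
Proof.
  set (l := lim (filtermap G (at_right 0))).
  assert (Hlim : filterlim G (at_right 0) (locally l)).
  { intros P [eps HP]; apply (filter_imp (ball l eps)); [exact HP |].
    apply complete_cauchy; [apply filtermap_proper_filter, at_right_proper_filter |].
    apply cauchy_RInt_at_right_0. }
  exists l; split.
  - intros P HP; apply Filter_prod with (fun a => 0 < a < b /\ P (G a)) (fun y => y = b).
    + apply filter_and; [apply at_right_0_lt, Hb | apply Hlim, HP].
    + reflexivity.
    + intros a y [Ha HPa] ->; exists (G a); split; [| exact HPa].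
      apply RInt_correct, ex_RInt_dominated; lra.
  - assert (Hle : Rbar_le (norm l) (Rpower b d)).
    { apply (filterlim_le (F := at_right 0) (fun a => norm (G a)) (fun _ => Rpower b d)).
      + apply (filter_imp (fun a => 0 < a < b)); [| apply at_right_0_lt, Hb].
        intros a Ha; pose proof (norm_RInt_dominated a b ltac:(lra) ltac:(lra)).
        pose proof (Rpower_gt_0 a d); unfold G; lra.
      + eapply filterlim_comp; [exact Hlim | exact (filterlim_norm l)].
      + apply filterlim_const. }
    exact Hle.
Qed.

End PowerDominatedImproperIntegral.

Definition ln_gap (L x : R) := / ln x - / L.
Definition gap_weight (d L x : R) := d * Rpower x (d - 1) * ln_gap L x.
Definition gap_factor (d : R) (k : nat) (L x : R) :=
  d / INR k * Rpower x (d - INR k) * ln_gap L x.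
Definition gap_factor' (d : R) (k : nat) (L x : R) :=
  d / INR k * ((d - INR k) * Rpower x (d - INR k - 1) * ln_gap L x
               + Rpower x (d - INR k) * (- / x / (ln x * ln x))).

Lemma ln_gap_nonneg L x : 1 < x -> ln x <= L -> 0 <= ln_gap L x.
Proof.
  intros Hx HL; pose proof (ln_gt_0 x Hx); unfold ln_gap.
  assert (/ L <= / ln x) by (apply Rinv_le_contravar; lra); lra.
Qed.

Lemma ln_gap_le_inv_ln2 L x : 2 <= x -> ln x <= L -> ln_gap L x <= / ln 2.
Proof.
  intros Hx HL; pose proof (ln_gt_0 2 ltac:(lra)); pose proof (ln_le 2 x ltac:(lra) Hx).
  assert (/ ln x <= / ln 2) by (apply Rinv_le_contravar; lra).
  assert (0 < / L) by (apply Rinv_0_lt_compat; lra).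
  unfold ln_gap; lra.
Qed.

Lemma ln_gap_le_near_L L x h : 0 < ln x -> ln x <= L -> L - ln x <= h -> L <= 2 * ln x ->
  ln_gap L x <= 2 * h / L ^ 2.
Proof.
  intros Hu HuL Hh H2; unfold ln_gap; set (u := ln x) in *.
  replace (/ u - / L) with ((L - u) * L * / (u * L * L)) by (field; lra).
  replace (2 * h / L ^ 2) with (2 * h * u * / (u * L * L)) by (field; lra).
  apply Rmult_le_compat_r; [left; apply Rinv_0_lt_compat, Rmult_lt_0_compat; [apply Rmult_lt_0_compat |]; lra |].
  assert (0 <= h * (2 * u - L)) by (apply Rmult_le_pos; lra).
  assert (0 <= (h - (L - u)) * L) by (apply Rmult_le_pos; lra).
  lra.
Qed.

Lemma is_derive_gap_factor d k L x : 1 < x -> is_derive (gap_factor d k L) x (gap_factor' d k L x).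
Proof.
  intros Hx; pose proof (ln_gt_0 x Hx); unfold gap_factor, gap_factor', ln_gap.
  auto_derive.
  - repeat split; try lra; apply ex_derive_Rpower; lra.
  - replace (Derive (fun x => Rpower x (d - INR k)) x) with ((d - INR k) * Rpower x (d - INR k - 1))
      by (symmetry; apply is_derive_unique, is_derive_Rpower; lra).
    unfold Rdiv, Rminus; ring.
Qed.

Lemma continuous_gap_factor' d k L x : 1 < x -> continuous (gap_factor' d k L) x.
Proof.
  intros Hx; pose proof (ln_gt_0 x Hx).
  apply (ex_derive_continuous (gap_factor' d k L)); unfold gap_factor', ln_gap.
  auto_derive; repeat split; try lra; try (apply ex_derive_Rpower; lra); nra.
Qed.

Lemma gap_factor_nonneg d k L x : 0 < d -> 0 < INR k -> 1 < x -> ln x <= L ->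
  0 <= gap_factor d k L x.
Proof.
  intros Hd Hk Hx HL; pose proof (ln_gap_nonneg L x Hx HL).
  pose proof (Rpower_gt_0 x (d - INR k)).
  assert (0 < d / INR k) by (apply Rdiv_lt_0_compat; lra).
  unfold gap_factor; apply Rmult_le_pos; nra.
Qed.

Lemma gap_factor'_nonpos d k L x : 0 < d < INR k -> 1 < x -> ln x <= L ->
  gap_factor' d k L x <= 0.
Proof.
  intros Hd Hx HL; pose proof (ln_gt_0 x Hx); pose proof (ln_gap_nonneg L x Hx HL).
  pose proof (Rpower_gt_0 x (d - INR k - 1)); pose proof (Rpower_gt_0 x (d - INR k)).
  assert (0 < d / INR k) by (apply Rdiv_lt_0_compat; lra).
  assert (0 < / x / (ln x * ln x)) by (apply Rdiv_lt_0_compat; [apply Rinv_0_lt_compat |]; nra).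
  assert (0 <= Rpower x (d - INR k - 1) * ln_gap L x) by nra.
  unfold gap_factor'; apply Rmult_le_0_l; [lra |].
  replace (- / x / (ln x * ln x)) with (- (/ x / (ln x * ln x))) by (unfold Rdiv; ring).
  nra.
Qed.

Lemma abs_is_RInt_nonincreasing_mul_le (phi phi' F : R -> R) (a b l : R) : a <= b ->
  (forall x, a <= x <= b -> is_derive phi x (phi' x)) ->
  (forall x, a <= x <= b -> continuous phi' x) ->
  (forall x, a <= x <= b -> phi' x <= 0) ->
  (forall x, a <= x <= b -> Rabs (F x) <= 1) ->
  is_RInt (fun x => phi' x * F x) a b l -> Rabs l <= phi a - phi b.
Proof.
  intros Hab Hphi Hphi' Hdec HFb Hl.
  apply (norm_RInt_le (V := R_NormedModule) (fun t => phi' t * F t) (fun t => - phi' t) a b);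
    [exact Hab | | exact Hl |].
  - intros x Hx; change (Rabs (phi' x * F x) <= - phi' x).
    rewrite Rabs_mult, Rabs_left1 by (apply Hdec; lra).
    pose proof (Hdec x Hx); pose proof (HFb x Hx); pose proof (Rabs_pos (F x)); nra.
  - replace (phi a - phi b) with (- phi b - - phi a) by ring.
    apply (is_RInt_derive (fun t => - phi t)); intros x Hx;
      rewrite Rmin_left, Rmax_right in Hx by lra.
    + apply (is_derive_opp phi), Hphi, Hx.
    + apply (continuous_opp phi'), Hphi', Hx.
Qed.

Lemma abs_RInt_mul_derive_le (phi phi' F F' : R -> R) (a b : R) : a <= b ->
  (forall x, a <= x <= b -> is_derive phi x (phi' x)) ->
  (forall x, a <= x <= b -> continuous phi' x) ->
  (forall x, a <= x <= b -> is_derive F x (F' x)) ->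
  (forall x, a <= x <= b -> continuous F' x) ->
  (forall x, a <= x <= b -> phi' x <= 0) ->
  (forall x, a <= x <= b -> 0 <= phi x) ->
  (forall x, a <= x <= b -> Rabs (F x) <= 1) ->
  Rabs (RInt (fun x => phi x * F' x) a b) <= 2 * phi a.
Proof.
  intros Hab Hphi Hphi' HF HF' Hdec Hpos HFb.
  assert (HI : forall x, Rmin a b <= x <= Rmax a b -> a <= x <= b)
    by (rewrite Rmin_left, Rmax_right by lra; auto).
  set (l := RInt (fun t => phi' t * F t) a b).
  assert (Hl : is_RInt (fun t => phi' t * F t) a b l).
  { apply (RInt_correct (V := R_CompleteNormedModule)), (ex_RInt_continuous (V := R_CompleteNormedModule)).
    intros x Hx; apply (continuous_mult phi' F); [apply Hphi', HI, Hx |].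
    apply (ex_derive_continuous F); eexists; apply HF, HI, Hx. }
  assert (Hparts := is_RInt_scal_derive_r (V := R_CompleteNormedModule) phi F phi' F' a b l
    (fun x Hx => Hphi x (HI x Hx)) (fun x Hx => HF x (HI x Hx))
    (fun x Hx => Hphi' x (HI x Hx)) (fun x Hx => HF' x (HI x Hx)) Hl).
  apply is_RInt_unique in Hparts.
  change (RInt (fun t => scal (phi t) (F' t)) a b) with (RInt (fun x => phi x * F' x) a b) in Hparts.
  rewrite Hparts.
  change (Rabs (phi b * F b - phi a * F a - l) <= 2 * phi a).
  assert (Hlb := abs_is_RInt_nonincreasing_mul_le phi phi' F a b l Hab Hphi Hphi' Hdec HFb Hl).
  assert (Ha : a <= a <= b) by lra; assert (Hb : a <= b <= b) by lra.
  assert (Rabs (phi b * F b) <= phi b)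
    by (rewrite Rabs_mult, (Rabs_pos_eq (phi b)) by auto; pose proof (HFb b Hb); pose proof (Hpos b Hb); nra).
  assert (Rabs (phi a * F a) <= phi a)
    by (rewrite Rabs_mult, (Rabs_pos_eq (phi a)) by auto; pose proof (HFb a Ha); pose proof (Hpos a Ha); nra).
  pose proof (Rabs_triang (phi b * F b - phi a * F a) (- l)).
  pose proof (Rabs_triang (phi b * F b) (- (phi a * F a))).
  rewrite !Rabs_Ropp in *; unfold Rminus in *; lra.
Qed.

Lemma continuous_gap_weight d L x : 1 < x -> continuous (gap_weight d L) x.
Proof.
  intros Hx; pose proof (ln_gt_0 x Hx).
  apply (ex_derive_continuous (gap_weight d L)); unfold gap_weight, ln_gap.
  auto_derive; repeat split; try lra; apply ex_derive_Rpower; lra.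
Qed.

Section OscillatoryGapIntegral.

Variables (d : R) (k : nat) (beta : R) (F T : R -> R).
Hypotheses (Hd : 0 < d) (Hdk : d < INR k) (Hbeta : beta <> 0)
  (F_derive : forall x, 0 < x -> is_derive F x (2 * PI * beta * INR k * x ^ (k - 1) * T x))
  (T_cont : forall x, 0 < x -> continuous T x)
  (F_bound : forall x, Rabs (F x) <= 1) (T_bound : forall x, Rabs (T x) <= 1).

Lemma ex_RInt_gap_weight_mul L a b : 1 < a <= b -> ex_RInt (fun x => gap_weight d L x * T x) a b.
Proof.
  intros Hab; apply (ex_RInt_continuous (V := R_CompleteNormedModule)).
  rewrite Rmin_left, Rmax_right by lra; intros x Hx.
  apply (continuous_mult (gap_weight d L) T); [apply continuous_gap_weight | apply T_cont]; lra.
Qed.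

Lemma abs_RInt_gap_weight_le L gam a b : 1 < a <= b -> ln b <= L ->
  (forall x, a <= x <= b -> ln_gap L x <= gam) ->
  Rabs (RInt (fun x => gap_weight d L x * T x) a b) <= gam * (Rpower b d - Rpower a d).
Proof.
  intros Hab HbL Hgam.
  apply (norm_RInt_le (V := R_NormedModule) (fun x => gap_weight d L x * T x) (fun x => gam * (d * Rpower x (d - 1))) a b);
    [lra | | apply (RInt_correct (V := R_CompleteNormedModule)), ex_RInt_gap_weight_mul; lra |].
  - intros x Hx; change (Rabs (gap_weight d L x * T x) <= gam * (d * Rpower x (d - 1))).
    assert (Hln : ln x <= L) by (apply Rle_trans with (ln b); [apply ln_le |]; lra).
    pose proof (ln_gap_nonneg L x ltac:(lra) Hln); pose proof (Hgam x Hx).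
    pose proof (Rpower_gt_0 x (d - 1)); pose proof (T_bound x); pose proof (Rabs_pos (T x)).
    unfold gap_weight; rewrite Rabs_mult, Rabs_pos_eq by (apply Rmult_le_pos; [apply Rmult_le_pos |]; lra).
    assert (0 < d * Rpower x (d - 1)) by nra.
    assert (ln_gap L x * Rabs (T x) <= gam) by nra.
    nra.
  - apply (is_RInt_scal (V := R_CompleteNormedModule) (fun x => d * Rpower x (d - 1))).
    apply is_RInt_power_density; lra.
Qed.

(* [gap_weight = gap_factor * k x^(k-1)]: the form in which integration by parts against [F] applies. *)
Lemma gap_weight_mul_eq L x t : 0 < x ->
  gap_weight d L x * t
  = / (2 * PI * beta) * (gap_factor d k L x * (2 * PI * beta * INR k * x ^ (k - 1) * t)).
Proof.
  intros Hx; unfold gap_weight, gap_factor.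
  rewrite <- (Rpower_sub_mul_pow d k x) by (try apply (INR_lt 0); simpl; lra).
  pose proof PI_RGT_0; field; repeat split; lra.
Qed.

Lemma abs_RInt_gap_weight_ibp L a b : 1 < a <= b -> ln b <= L ->
  Rabs (RInt (fun x => gap_weight d L x * T x) a b) <= 2 * gap_factor d k L a / (2 * PI * Rabs beta).
Proof.
  intros Hab HbL.
  set (F' := fun x => 2 * PI * beta * INR k * x ^ (k - 1) * T x).
  assert (HF' : forall x, 0 < x -> continuous F' x).
  { intros x Hx; apply (continuous_mult (fun x => 2 * PI * beta * INR k * x ^ (k - 1)) T); auto.
    apply (ex_derive_continuous (fun x => 2 * PI * beta * INR k * x ^ (k - 1))); auto_derive; auto. }
  assert (Hln : forall x, a <= x <= b -> ln x <= L)
    by (intros x Hx; apply Rle_trans with (ln b); [apply ln_le |]; lra).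
  rewrite (RInt_ext _ (fun x => scal (/ (2 * PI * beta)) (gap_factor d k L x * F' x)))
    by (intros x Hx; rewrite Rmin_left, Rmax_right in Hx by lra; apply gap_weight_mul_eq; lra).
  rewrite (RInt_scal (V := R_CompleteNormedModule)).
  2: { apply (ex_RInt_continuous (V := R_CompleteNormedModule)); rewrite Rmin_left, Rmax_right by lra.
       intros x Hx; apply (continuous_mult (gap_factor d k L) F'); [| apply HF'; lra].
       apply (ex_derive_continuous (gap_factor d k L)); eexists; apply is_derive_gap_factor; lra. }
  change (Rabs (/ (2 * PI * beta) * RInt (fun x => gap_factor d k L x * F' x) a b)
          <= 2 * gap_factor d k L a / (2 * PI * Rabs beta)).
  assert (Hparts : Rabs (RInt (fun x => gap_factor d k L x * F' x) a b) <= 2 * gap_factor d k L a).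
  { apply (abs_RInt_mul_derive_le _ (gap_factor' d k L) F); [lra | intros x Hx .. ].
    - apply is_derive_gap_factor; lra.
    - apply continuous_gap_factor'; lra.
    - apply F_derive; lra.
    - apply HF'; lra.
    - apply gap_factor'_nonpos; [lra | lra | apply Hln, Hx].
    - apply gap_factor_nonneg; [lra | lra | lra | apply Hln, Hx].
    - apply F_bound. }
  pose proof PI_RGT_0; pose proof (Rabs_pos_lt beta Hbeta).
  rewrite Rabs_mult, Rabs_inv, !Rabs_mult, (Rabs_pos_eq 2), (Rabs_pos_eq PI) by lra.
  unfold Rdiv; rewrite Rmult_comm; apply Rmult_le_compat_r; [| exact Hparts].
  left; apply Rinv_0_lt_compat; nra.
Qed.

(* [t0] is the scale at which the phase [beta x^k] becomes of size one. *)
Let t0 := Rpower (Rabs beta) (- / INR k).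

Lemma Rpower_t0_d : Rpower t0 d = Rpower (Rabs beta) (- (d / INR k)).
Proof. unfold t0; rewrite Rpower_mult; f_equal; field; lra. Qed.

Lemma Rpower_t0_sub : Rpower t0 (d - INR k) = Rpower t0 d * Rabs beta.
Proof.
  pose proof (Rabs_pos_lt beta Hbeta).
  unfold t0; rewrite !Rpower_mult.
  rewrite <- (Rpower_1 (Rabs beta)) at 3 by lra.
  rewrite <- Rpower_plus; f_equal; field; lra.
Qed.

Lemma ibp_gap_factor_le L gam a : 1 < a -> t0 <= a -> ln a <= L -> ln_gap L a <= gam ->
  2 * gap_factor d k L a / (2 * PI * Rabs beta) <= gam * Rpower t0 d.
Proof.
  intros Ha Ht0 HaL Hgam; pose proof (ln_gap_nonneg L a Ha HaL).
  pose proof PI_RGT_0; pose proof (Rabs_pos_lt beta Hbeta); pose proof (Rpower_gt_0 t0 d).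
  assert (Hpow : Rpower a (d - INR k) <= Rpower t0 d * Rabs beta).
  { rewrite <- Rpower_t0_sub; apply Rpower_le_l_nonpos; [split; [apply Rpower_gt_0 | lra] | lra]. }
  assert (Hdk1 : d / INR k <= 1) by (apply Rmult_le_reg_r with (INR k); [lra |]; field_simplify; lra).
  pose proof (Rpower_gt_0 a (d - INR k)).
  assert (Hphi : gap_factor d k L a <= Rpower t0 d * Rabs beta * gam).
  { unfold gap_factor.
    assert (0 < d / INR k) by (apply Rdiv_lt_0_compat; lra).
    assert (Rpower a (d - INR k) * ln_gap L a <= Rpower t0 d * Rabs beta * gam)
      by (apply Rmult_le_compat; lra).
    assert (0 <= Rpower a (d - INR k) * ln_gap L a) by nra.
    nra. }
  apply Rmult_le_reg_r with (2 * PI * Rabs beta); [nra |].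
  unfold Rdiv; rewrite Rmult_assoc, Rinv_l by nra.
  assert (0 <= Rpower t0 d * Rabs beta * gam) by (apply Rmult_le_pos; nra).
  pose proof PI2_3_2; nra.
Qed.

Lemma abs_RInt_gap_weight_min L gam a b : 1 < a <= b -> ln b <= L ->
  (forall x, a <= x <= b -> ln_gap L x <= gam) ->
  Rabs (RInt (fun x => gap_weight d L x * T x) a b) <= 2 * gam * Rmin (Rpower b d) (Rpower t0 d).
Proof.
  intros Hab HbL Hgam.
  assert (Hln : forall x, a <= x <= b -> ln x <= L)
    by (intros x Hx; apply Rle_trans with (ln b); [apply ln_le |]; lra).
  assert (Hgam0 : 0 <= gam)
    by (apply Rle_trans with (ln_gap L a); [apply ln_gap_nonneg; [| apply Hln] | apply Hgam]; lra).
  assert (Ht0 : 0 < t0) by apply Rpower_gt_0.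
  pose proof (Rpower_gt_0 a d); pose proof (Rpower_gt_0 b d); pose proof (Rpower_gt_0 t0 d).
  destruct (Rle_lt_dec b t0) as [Hbt | Htb].
  - rewrite Rmin_left by (apply Rle_Rpower_l; lra).
    pose proof (abs_RInt_gap_weight_le L gam a b Hab HbL Hgam); nra.
  - rewrite Rmin_right by (left; apply Rlt_Rpower_l; lra).
    destruct (Rle_lt_dec t0 a) as [Hta | Hat].
    + pose proof (abs_RInt_gap_weight_ibp L a b Hab HbL).
      pose proof (ibp_gap_factor_le L gam a ltac:(lra) Hta (Hln a ltac:(lra)) (Hgam a ltac:(lra))).
      nra.
    + rewrite <- (RInt_Chasles (V := R_CompleteNormedModule) _ a t0 b)
        by (apply ex_RInt_gap_weight_mul; lra).
      change (plus ?u ?v) with (u + v).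
      pose proof (abs_RInt_gap_weight_le L gam a t0 ltac:(lra) ltac:(apply Hln; lra)
        ltac:(intros; apply Hgam; lra)).
      pose proof (abs_RInt_gap_weight_ibp L t0 b ltac:(lra) HbL).
      pose proof (ibp_gap_factor_le L gam t0 ltac:(lra) ltac:(lra) ltac:(apply Hln; lra)
        ltac:(apply Hgam; lra)).
      eapply Rle_trans; [apply Rabs_triang | nra].
Qed.

Lemma abs_RInt_gap_weight_2_X_large m lam X : 1 <= m -> 2 < X -> 16 * m ^ 2 < ln X ->
  ln (ln X) <= lam ->
  Rabs (RInt (fun x => gap_weight d (ln X) x * T x) 2 X)
  <= / ln 2 * (Rpower X d / Rpower (ln X) (m * d))
     + 4 * m * Rmin (Rpower X d) (Rpower t0 d) * lam / ln X ^ 2.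
Proof.
  intros Hm HX HLm Hlam; set (L := ln X) in *.
  pose proof (ln_gt_0 2 ltac:(lra)); pose proof ln_2_lt_1.
  pose proof (mul_ln_le_half m L ltac:(lra) ltac:(lra)) as HmL.
  assert (HlnL : 0 < ln L) by (apply ln_gt_0; nra).
  set (Y := exp (L - m * ln L)).
  assert (HlnY : ln Y = L - m * ln L) by apply ln_exp.
  assert (HY2 : 2 < Y) by (unfold Y; rewrite <- (exp_ln 2) by lra; apply exp_increasing; nra).
  assert (HYX : Y <= X)
    by (unfold Y; rewrite <- (exp_ln X) by lra; left; apply exp_increasing; fold L; nra).
  assert (HYd : Rpower Y d = Rpower X d / Rpower L (m * d)).
  { unfold Rpower; rewrite HlnY; fold L.
    replace (d * (L - m * ln L)) with (d * L + - (m * d * ln L)) by ring.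
    rewrite exp_plus, exp_Ropp; reflexivity. }
  rewrite <- (RInt_Chasles (V := R_CompleteNormedModule) _ 2 Y X)
    by (apply ex_RInt_gap_weight_mul; lra).
  change (plus ?u ?v) with (u + v).
  eapply Rle_trans; [apply Rabs_triang | apply Rplus_le_compat].
  - eapply Rle_trans.
    + apply (abs_RInt_gap_weight_le L (/ ln 2) 2 Y); [lra | apply ln_le; lra |].
      intros x Hx; apply ln_gap_le_inv_ln2; [lra | apply ln_le; lra].
    + rewrite <- HYd; pose proof (Rpower_gt_0 2 d).
      assert (0 < / ln 2) by (apply Rinv_0_lt_compat; lra); nra.
  - eapply Rle_trans.
    + apply (abs_RInt_gap_weight_min L (2 * (m * lam) / L ^ 2) Y X); [lra | apply Rle_refl |].
      intros x Hx; assert (ln Y <= ln x) by (apply ln_le; lra).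
      assert (ln x <= L) by (apply ln_le; lra).
      apply ln_gap_le_near_L; nra.
    + right; unfold Rdiv; ring.
Qed.

Lemma abs_RInt_gap_weight_2_X m lam X : 1 <= m -> 2 < X -> ln (ln X) <= lam -> 0 <= lam ->
  Rabs (RInt (fun x => gap_weight d (ln X) x * T x) 2 X)
  <= (Rpower (16 * m ^ 2) (m * d) + 1) / ln 2 * (Rpower X d / Rpower (ln X) (m * d))
     + 4 * m * Rmin (Rpower X d) (Rpower (Rabs beta) (- (d / INR k))) * lam / ln X ^ 2.
Proof.
  intros Hm HX Hlam Hlam0; set (L := ln X) in *; rewrite <- Rpower_t0_d.
  pose proof (ln_gt_0 2 ltac:(lra)); pose proof ln_2_lt_1.
  assert (HL : ln 2 < L) by (apply ln_increasing; lra).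
  assert (Hinv2 : 0 < / ln 2) by (apply Rinv_0_lt_compat; lra).
  pose proof (Rpower_gt_0 X d); pose proof (Rpower_gt_0 L (m * d)).
  set (P := Rpower X d / Rpower L (m * d)).
  assert (HP : 0 < P) by (apply Rdiv_lt_0_compat; lra).
  assert (Hsec : 0 <= 4 * m * Rmin (Rpower X d) (Rpower t0 d) * lam / L ^ 2).
  { pose proof (Rpower_gt_0 t0 d); assert (0 < L ^ 2) by nra.
    apply Rmult_le_pos; [| left; apply Rinv_0_lt_compat; lra].
    apply Rmult_le_pos; [apply Rmult_le_pos; [lra | apply Rmin_glb; lra] | lra]. }
  pose proof (Rpower_gt_0 (16 * m ^ 2) (m * d)).
  destruct (Rle_lt_dec L (16 * m ^ 2)) as [Hsmall | Hlarge].
  - assert (HXd : Rpower X d <= P * Rpower (16 * m ^ 2) (m * d)).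
    { replace (Rpower X d) with (P * Rpower L (m * d)) by (unfold P; field; lra).
      apply Rmult_le_compat_l; [lra | apply Rle_Rpower_l; [nra | lra]]. }
    eapply Rle_trans.
    + apply (abs_RInt_gap_weight_le L (/ ln 2) 2 X); [lra | apply Rle_refl |].
      intros x Hx; apply ln_gap_le_inv_ln2; [lra | apply ln_le; lra].
    + pose proof (Rpower_gt_0 2 d); unfold Rdiv at 1; nra.
  - pose proof (abs_RInt_gap_weight_2_X_large m lam X Hm HX Hlarge Hlam) as Hbound.
    fold L P in Hbound.
    assert (0 <= Rpower (16 * m ^ 2) (m * d) * / ln 2 * P) by (apply Rmult_le_pos; [apply Rmult_le_pos |]; lra).
    unfold Rdiv at 1; nra.
Qed.

End OscillatoryGapIntegral.

Lemma norm_C_eq_Cmod (z : C_R_NormedModule) : norm z = Cmod z.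
Proof.
  destruct z as [a b]; unfold norm; simpl; unfold prod_norm, Cmod; simpl.
  unfold norm; simpl; unfold abs; simpl.
  rewrite !Rmult_1_r, <- !Rabs_mult, !Rabs_pos_eq by apply Rle_0_sqr; reflexivity.
Qed.

Lemma Cmod_scal (r : R) (z : C) : Cmod (scal r z) = Rabs r * Cmod z.
Proof.
  rewrite <- Cmod_R, <- Cmod_mult; f_equal; destruct z as [a b].
  apply injective_projections; simpl; unfold scal; simpl; unfold mult; simpl; ring.
Qed.

Lemma Cmod_e t : Cmod (e_ t) = 1.
Proof.
  unfold e_, Cmod; simpl; rewrite !Rmult_1_r, <- sqrt_1; f_equal.
  pose proof (sin2_cos2 (2 * PI * t)); unfold Rsqr in *; lra.
Qed.

Lemma continuous_C_pair (f g : R -> R) x : continuous f x -> continuous g x ->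
  continuous (fun y => ((f y, g y) : C_R_CompleteNormedModule)) x.
Proof.
  intros Hf Hg P [eps HP]; change (locally x (fun y => P (f y, g y))).
  apply (filter_imp (fun y => ball (f x) eps (f y) /\ ball (g x) eps (g y))).
  - intros y [H1 H2]; apply HP; split; assumption.
  - apply filter_and; [apply Hf | apply Hg]; apply locally_ball.
Qed.

Lemma continuous_e_phase (k : nat) z x :
  continuous (fun y => (e_ (z * y ^ k) : C_R_CompleteNormedModule)) x.
Proof.
  apply continuous_C_pair.
  - apply (ex_derive_continuous (fun y => cos (2 * PI * (z * y ^ k)))); auto_derive; auto.
  - apply (ex_derive_continuous (fun y => sin (2 * PI * (z * y ^ k)))); auto_derive; auto.
Qed.

Lemma continuous_integrand d k z x : 0 < x -> continuous (integrand d k z) x.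
Proof.
  intros Hx; apply (continuous_scal (fun y => d * Rpower y (d - 1)) (fun y => e_ (z * y ^ k))).
  - apply (ex_derive_continuous (fun y => d * Rpower y (d - 1))); auto_derive.
    apply ex_derive_Rpower, Hx.
  - apply continuous_e_phase.
Qed.

Lemma Cmod_integrand_le d k z x : 0 < d -> Cmod (integrand d k z x) <= d * Rpower x (d - 1).
Proof.
  intros Hd; unfold integrand; rewrite Cmod_scal, Cmod_e, Rmult_1_r.
  pose proof (Rpower_gt_0 x (d - 1)); rewrite Rabs_pos_eq by nra; lra.
Qed.

Lemma ex_RInt_integrand d k z a b : 0 < a <= b ->
  ex_RInt (V := C_R_CompleteNormedModule) (integrand d k z) a b.
Proof.
  intros Hab; apply ex_RInt_continuous; rewrite Rmin_left, Rmax_right by lra.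
  intros x Hx; apply continuous_integrand; lra.
Qed.

Lemma Jint_sub_scal_RInt d k X z L : 2 <= X ->
  Cminus (Jint d k X z) (scal (/ L) (RInt (V := C_R_CompleteNormedModule) (integrand d k z) 2 X))
  = RInt (V := C_R_CompleteNormedModule) (fun x => scal (gap_weight d L x) (e_ (z * x ^ k))) 2 X.
Proof.
  intros HX; unfold Jint.
  assert (HexJ : ex_RInt (V := C_R_CompleteNormedModule)
                   (fun x => scal (/ ln x) (integrand d k z x)) 2 X).
  { apply ex_RInt_continuous; rewrite Rmin_left, Rmax_right by lra; intros x Hx.
    apply (continuous_scal (fun y => / ln y) (integrand d k z)); [| apply continuous_integrand; lra].
    pose proof (ln_gt_0 x ltac:(lra)).
    apply (ex_derive_continuous (fun y => / ln y)); auto_derive; repeat split; lra. }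
  assert (HexI := ex_RInt_integrand d k z 2 X ltac:(lra)).
  rewrite <- (RInt_scal (V := C_R_CompleteNormedModule)) by exact HexI.
  set (A := RInt _ 2 X); set (B := RInt _ 2 X).
  change (Cminus A B) with (minus A B); unfold A, B.
  symmetry; apply (is_RInt_unique (V := C_R_CompleteNormedModule)).
  apply (is_RInt_ext (fun x => minus (scal (/ ln x) (integrand d k z x)) (scal (/ L) (integrand d k z x)))).
  - intros x _; unfold integrand, gap_weight, ln_gap.
    rewrite !scal_assoc, <- scal_minus_distr_r.
    f_equal; unfold minus, plus, opp, mult; simpl; ring.
  - apply (is_RInt_minus (V := C_R_CompleteNormedModule)); apply RInt_correct; [exact HexJ |].
    apply (ex_RInt_scal (V := C_R_CompleteNormedModule)), HexI.
Qed.

Lemma Iint_eq_plus_RInt d k X z : 0 < d -> 2 <= X ->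
  exists l : C, Cmod l <= Rpower 2 d /\
    Iint d k X z = plus l (RInt (V := C_R_CompleteNormedModule) (integrand d k z) 2 X).
Proof.
  intros Hd HX.
  destruct (is_RInt_gen_at_right_0_dominated C_R_CompleteNormedModule (integrand d k z) d 2)
    as [l [Hl Hnorm]]; [lra | exact Hd | intros x Hx; apply continuous_integrand; lra | |].
  { intros x Hx; rewrite norm_C_eq_Cmod; apply Cmod_integrand_le, Hd. }
  exists l; split; [rewrite <- norm_C_eq_Cmod; exact Hnorm |].
  apply (is_RInt_gen_unique (V := C_R_CompleteNormedModule)).
  apply (is_RInt_gen_Chasles (V := C_R_NormedModule) _ 2); [exact Hl |].
  apply is_RInt_gen_at_point, (RInt_correct (V := C_R_CompleteNormedModule)), ex_RInt_integrand; lra.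
Qed.

Lemma RInt_fst (f : R -> C_R_CompleteNormedModule) a b : ex_RInt f a b ->
  fst (RInt f a b) = RInt (fun x => fst (f x)) a b.
Proof.
  intros H; symmetry; apply is_RInt_unique.
  apply (is_RInt_fct_extend_fst (U := R_NormedModule) (V := R_NormedModule)).
  apply (RInt_correct (V := C_R_CompleteNormedModule)), H.
Qed.

Lemma RInt_snd (f : R -> C_R_CompleteNormedModule) a b : ex_RInt f a b ->
  snd (RInt f a b) = RInt (fun x => snd (f x)) a b.
Proof.
  intros H; symmetry; apply is_RInt_unique.
  apply (is_RInt_fct_extend_snd (U := R_NormedModule) (V := R_NormedModule)).
  apply (RInt_correct (V := C_R_CompleteNormedModule)), H.
Qed.

Lemma Cmod_RInt_gap_weight_e d k beta m lam X : 0 < d < INR k -> beta <> 0 -> 1 <= m -> 2 < X ->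
  ln (ln X) <= lam -> 0 <= lam ->
  Cmod (RInt (V := C_R_CompleteNormedModule)
          (fun x => scal (gap_weight d (ln X) x) (e_ (beta * x ^ k))) 2 X)
  <= 2 * ((Rpower (16 * m ^ 2) (m * d) + 1) / ln 2 * (Rpower X d / Rpower (ln X) (m * d))
          + 4 * m * Rmin (Rpower X d) (Rpower (Rabs beta) (- (d / INR k))) * lam / ln X ^ 2).
Proof.
  intros Hd Hbeta Hm HX Hlam Hlam0.
  assert (Hk1 : (k - 1 = Init.Nat.pred k)%nat) by lia.
  set (phase := fun x => 2 * PI * (beta * x ^ k)).
  assert (Hcont : forall x, 0 < x -> continuous (fun y => cos (phase y)) x
                                  /\ continuous (fun y => sin (phase y)) x).
  { intros x _; unfold phase; split.
    - apply (ex_derive_continuous (fun y => cos (2 * PI * (beta * y ^ k)))); auto_derive; auto.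
    - apply (ex_derive_continuous (fun y => sin (2 * PI * (beta * y ^ k)))); auto_derive; auto. }
  assert (Hcos := abs_RInt_gap_weight_2_X d k beta (fun x => sin (phase x)) (fun x => cos (phase x))
    ltac:(lra) ltac:(lra) Hbeta
    ltac:(intros x _; unfold phase; auto_derive; auto; rewrite Hk1; ring)
    ltac:(intros x Hx; apply Hcont, Hx) ltac:(intros; apply Rabs_le, SIN_bound)
    ltac:(intros; apply Rabs_le, COS_bound) m lam X Hm HX Hlam Hlam0).
  assert (Hsin := abs_RInt_gap_weight_2_X d k beta (fun x => - cos (phase x)) (fun x => sin (phase x))
    ltac:(lra) ltac:(lra) Hbeta
    ltac:(intros x _; unfold phase; auto_derive; auto; rewrite Hk1; ring)
    ltac:(intros x Hx; apply Hcont, Hx) ltac:(intros; cbv beta; rewrite Rabs_Ropp; apply Rabs_le, COS_bound)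
    ltac:(intros; apply Rabs_le, SIN_bound) m lam X Hm HX Hlam Hlam0).
  set (B := _ + _) in Hcos, Hsin |- *.
  assert (Hex : ex_RInt (V := C_R_CompleteNormedModule)
                  (fun x => scal (gap_weight d (ln X) x) (e_ (beta * x ^ k))) 2 X).
  { apply ex_RInt_continuous; rewrite Rmin_left, Rmax_right by lra; intros x Hx.
    apply (continuous_scal (V := C_R_NormedModule) (gap_weight d (ln X)) (fun y => e_ (beta * y ^ k)));
      [apply continuous_gap_weight; lra | apply continuous_e_phase]. }
  eapply Rle_trans; [apply Cmod_2Rmax |].
  rewrite (RInt_fst _ _ _ Hex), (RInt_snd _ _ _ Hex).
  assert (Hsqrt : sqrt 2 <= 2) by (rewrite <- (sqrt_square 2) at 2 by lra; apply sqrt_le_1_alt; lra).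
  assert (HB : 0 <= B) by (eapply Rle_trans; [apply Rabs_pos | exact Hcos]).
  apply Rle_trans with (sqrt 2 * B); [| apply Rmult_le_compat_r; lra].
  apply Rmult_le_compat_l; [apply sqrt_pos | apply Rmax_lub]; assumption.
Qed.

Lemma Cminus_scal_plus (J l I : C) (r : R) :
  Cminus J (scal r (plus l I)) = Cminus (Cminus J (scal r I)) (scal r l).
Proof.
  destruct J, l, I; apply injective_projections; simpl;
    unfold scal, plus; simpl; unfold mult, plus; simpl; ring.
Qed.

Lemma Cmod_Cminus_le (a b : C) : Cmod (Cminus a b) <= Cmod a + Cmod b.
Proof. rewrite <- (Cmod_opp b); apply Cmod_triangle. Qed.

Lemma Cmod_Jint_sub_Iint_le d k beta m lam X : 0 < d <= 1 -> d < INR k -> beta <> 0 ->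
  1 <= m -> 2 < X -> ln (ln X) <= lam -> 0 <= lam ->
  Cmod (Jint d k X beta - scal (/ ln X) (Iint d k X beta))
  <= 2 * ((Rpower (16 * m ^ 2) (m * d) + 1) / ln 2 * (Rpower X d / Rpower (ln X) (m * d))
          + 4 * m * Rmin (Rpower X d) (Rpower (Rabs beta) (- (d / INR k))) * lam / ln X ^ 2)
     + 2 / ln X.
Proof.
  intros Hd Hdk Hbeta Hm HX Hlam Hlam0.
  destruct (Iint_eq_plus_RInt d k X beta ltac:(lra) ltac:(lra)) as [l [Hl ->]].
  rewrite Cminus_scal_plus, Jint_sub_scal_RInt by lra.
  eapply Rle_trans; [apply Cmod_Cminus_le | apply Rplus_le_compat].
  - apply Cmod_RInt_gap_weight_e; lra.
  - assert (HL : 0 < ln X) by (apply ln_gt_0; lra).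
    assert (H2d : Rpower 2 d <= 2) by (rewrite <- (Rpower_1 2) at 2 by lra; apply Rle_Rpower; lra).
    rewrite Cmod_scal, Rabs_pos_eq by (left; apply Rinv_0_lt_compat, HL).
    unfold Rdiv; rewrite (Rmult_comm 2); apply Rmult_le_compat_l; [left; apply Rinv_0_lt_compat, HL | lra].
Qed.

Lemma Cmod_Jint_sub_Iint_le_Rpower d k beta kappa m lam X :
  0 < d < 1 -> d < INR k -> beta <> 0 -> 0 < kappa -> m * d = 2 + kappa -> 1 <= m -> 2 < X ->
  ln (ln X) <= lam -> 0 <= lam ->
  Cmod (Jint d k X beta - scal (/ ln X) (Iint d k X beta))
  <= (2 * ((Rpower (16 * m ^ 2) (m * d) + 1) / ln 2) + 2 * exp ((1 + kappa) ^ 2 / d) + 8 * m)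
     * (Rpower X d / ln X ^ 2 / Rpower (ln X) kappa
        + Rmin (Rpower X d) (Rpower (Rabs beta) (- (d / INR k))) * lam / ln X ^ 2).
Proof.
  intros Hd Hdk Hbeta Hkappa Hmd Hm HX Hlam Hlam0.
  assert (Hbound := Cmod_Jint_sub_Iint_le d k beta m lam X ltac:(lra) Hdk Hbeta Hm HX Hlam Hlam0).
  set (L := ln X) in *.
  assert (HL : ln 2 < L) by (apply ln_increasing; lra).
  pose proof (ln_gt_0 2 ltac:(lra)).
  set (K := (Rpower (16 * m ^ 2) (m * d) + 1) / ln 2) in *.
  set (E := exp ((1 + kappa) ^ 2 / d)).
  assert (HK : 0 < K) by (apply Rdiv_lt_0_compat; [pose proof (Rpower_gt_0 (16 * m ^ 2) (m * d)) |]; lra).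
  assert (HE : 0 < E) by apply exp_pos.
  set (P := Rpower X d / Rpower L (m * d)) in *.
  assert (HP : Rpower X d / L ^ 2 / Rpower L kappa = P).
  { assert (HLpow : L ^ 2 * Rpower L kappa = Rpower L (m * d)).
    { rewrite Hmd, Rpower_plus, <- (Rpower_pow 2 L) by lra; f_equal; f_equal; simpl; ring. }
    pose proof (Rpower_gt_0 L kappa); unfold P; rewrite <- HLpow; field; split; lra. }
  set (Q := Rmin (Rpower X d) (Rpower (Rabs beta) (- (d / INR k))) * lam / L ^ 2) in *.
  replace (4 * m * Rmin (Rpower X d) (Rpower (Rabs beta) (- (d / INR k))) * lam / L ^ 2)
    with (4 * m * Q) in Hbound by (unfold Q, Rdiv; ring).
  rewrite HP.
  assert (Hinv : / L <= E * P).
  { pose proof (inv_le_exp_div_Rpower (1 + kappa) d L ltac:(lra) ltac:(lra) ltac:(lra)) as Hi.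
    unfold E, P; replace (m * d) with (1 + (1 + kappa)) by lra; exact Hi. }
  assert (HP0 : 0 <= P) by (unfold P; left; apply Rdiv_lt_0_compat; apply Rpower_gt_0).
  assert (HQ0 : 0 <= Q).
  { unfold Q; pose proof (Rpower_gt_0 X d); pose proof (Rpower_gt_0 (Rabs beta) (- (d / INR k))).
    apply Rmult_le_pos; [apply Rmult_le_pos; [apply Rmin_glb |] | left; apply Rinv_0_lt_compat]; nra. }
  assert (0 <= m * P) by (apply Rmult_le_pos; lra).
  assert (0 <= (K + E) * Q) by (apply Rmult_le_pos; lra).
  unfold Rdiv in Hbound; nra.
Qed.

Theorem lemma6 (k : nat) (c kappa : R) :
  (3 <= k)%nat -> 1 < c -> 0 < kappa ->
  exists C : R, 0 < C /\
  forall (N : nat) (beta : R),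
    (0 < N)%nat ->
    2 < Rpower (INR N) (/ INR k) ->
    beta <> 0 ->
    let delta := / c in
    let X := Rpower (INR N) (/ INR k) in
    let L := ln X in
    Cmod (Jint delta k X beta - scal (/ L) (Iint delta k X beta))
    <= C * ( Rpower (INR N) (delta / INR k) / L ^ 2 / Rpower L kappa
           + Rmin (Rpower (INR N) (delta / INR k)) (Rpower (Rabs beta) (- (delta / INR k)))
             * ln (ln (INR N)) / L ^ 2 ).
Proof.
  intros Hk Hc Hkappa.
  assert (Hd : 0 < / c < 1) by (split; [apply Rinv_0_lt_compat | rewrite <- Rinv_1; apply Rinv_lt_contravar]; lra).
  set (m := (2 + kappa) * c).
  exists (2 * ((Rpower (16 * m ^ 2) (m * / c) + 1) / ln 2) + 2 * exp ((1 + kappa) ^ 2 / / c) + 8 * m).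
  split.
  { pose proof (Rpower_gt_0 (16 * m ^ 2) (m * / c)); pose proof (ln_gt_0 2 ltac:(lra)).
    pose proof (exp_pos ((1 + kappa) ^ 2 / / c)).
    assert (0 < (Rpower (16 * m ^ 2) (m * / c) + 1) / ln 2) by (apply Rdiv_lt_0_compat; lra).
    assert (0 < m) by (unfold m; nra); lra. }
  intros N beta HN HX Hbeta delta X L; subst delta; change (2 < X) in HX.
  assert (HkR : 3 <= INR k) by (replace 3 with (INR 3) by (simpl; ring); apply le_INR, Hk).
  assert (HN0 : 0 < INR N) by (apply lt_0_INR, HN).
  assert (HL : ln 2 < L) by (apply ln_increasing; lra).
  assert (HlnN : ln (INR N) = INR k * L) by (unfold L, X; rewrite ln_Rpower by lra; field; lra).
  assert (HXd : Rpower (INR N) (/ c / INR k) = Rpower X (/ c))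
    by (unfold X; rewrite Rpower_mult; f_equal; field; lra).
  rewrite HXd; pose proof ln_lt_2.
  apply Cmod_Jint_sub_Iint_le_Rpower; try lra.
  - unfold m; field; lra.
  - unfold m; nra.
  - apply ln_le; fold L; nra.
  - rewrite <- ln_1; apply ln_le; nra.
Qed.
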